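(* Let $\mathcal{I}$ be an interval hypergraph on $[n]$ closed under intersection. Then $P_{\mathcal{I}}$ is a lattice, and for acyclic orientations $A,B$ of $\mathcal{I}$, \[ A\vee B=\mathrm{Or}_{\sigma_A\vee\sigma_B}\quad\text{and}\quad A\wedge B=\mathrm{Or}_{\tau_A\wedge\tau_B}, \] where the joins and meets on the right are taken in the weak order on permutations of $[n]$.
   Context: An interval hypergraph $\mathcal{I}$ on $[n]$ is a collection of intervals of $[n]$ containing all singletons; it is closed under intersection if $I,J\in\mathcal{I}$, $I\cap J\ne\varnothing$ imply $I\cap J\in\mathcal{I}$. An orientation is a map $O:\mathcal{I}\to[n]$ with $O(I)\in I$; it is acyclic if there are no $H_1,\dots,H_k$, $k\ge2$, with $O(H_{i+1})\in H_i\setminus\{O(H_i)\}$ for $i\in[k-1]$ and $O(H_1)\in H_k\setminus\{O(H_k)\}$. Orientations $O\ne O'$ are related by an increasing flip (from $O$ to $O'$) if there exist $1\le i<j\le n$ such that for all $H$: if $O(H)\ne O'(H)$ then $O(H)=i$, $O'(H)=j$; and if $\{i,j\}\subseteq H$ then $O(H)=i\iff O'(H)=j$. $P_{\mathcal{I}}$ is the transitive closure of the increasing flip relation on acyclic orientations. For a permutation $\pi$ of $[n]$, $\mathrm{Or}_\pi(I)=\pi(\min\{j:\pi(j)\in I\})$; for each acyclic orientation $A$ the fiber $\{\pi:\mathrm{Or}_\pi=A\}$ is an interval $[\sigma_A,\tau_A]$ of the weak order. *)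

(* [n] is modelled by 'I_n = {0,...,n-1} (0-based). *)
From mathcomp Require Import all_boot all_order all_fingroup.
From Stdlib Require Import Relations.

Set Implicit Arguments.
Unset Strict Implicit.
Unset Printing Implicit Defensive.

Definition is_interval n (H : {set 'I_n}) : bool :=
  (H != set0) &&
  [forall i : 'I_n, forall j : 'I_n, forall k : 'I_n,
      [&& i \in H, k \in H, (i <= j)%N & (j <= k)%N] ==> (j \in H)].

Definition interval_hypergraph n (I : {set {set 'I_n}}) : Prop :=
  (forall H, H \in I -> is_interval H) /\ (forall x : 'I_n, [set x] \in I).

Definition closed_under_intersection n (I : {set {set 'I_n}}) : Prop :=
  forall H J, H \in I -> J \in I -> H :&: J != set0 -> H :&: J \in I.

Definition is_orientation n (I : {set {set 'I_n}}) (O : {ffun {H : {set 'I_n} | H \in I} -> 'I_n}) : Prop :=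
  forall e, O e \in val e.

Definition orient_step n (I : {set {set 'I_n}}) (O : {ffun {H : {set 'I_n} | H \in I} -> 'I_n})
  (e f : {H : {set 'I_n} | H \in I}) : bool :=
  (O f \in val e) && (O f != O e).

(* Acyclic: no H_1,...,H_k (k >= 2) with O(H_{i+1}) \in H_i \ {O(H_i)} and
   O(H_1) \in H_k \ {O(H_k)}; mathcomp's [cycle r (x :: p)] is exactly
   r x_1 x_2, ..., r x_{k-1} x_k, r x_k x_1. *)
Definition acyclic n (I : {set {set 'I_n}}) (O : {ffun {H : {set 'I_n} | H \in I} -> 'I_n}) : Prop :=
  forall s : seq {H : {set 'I_n} | H \in I}, (2 <= size s)%N -> ~~ path.cycle (orient_step O) s.

Definition acyclic_orientation n (I : {set {set 'I_n}}) (O : {ffun {H : {set 'I_n} | H \in I} -> 'I_n}) : Prop :=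
  is_orientation O /\ acyclic O.

Definition increasing_flip n (I : {set {set 'I_n}}) (O O' : {ffun {H : {set 'I_n} | H \in I} -> 'I_n}) : Prop :=
  O <> O' /\
  exists i j : 'I_n, (i < j)%N /\
    forall e : {H : {set 'I_n} | H \in I},
      (O e <> O' e -> O e = i /\ O' e = j) /\
      (i \in val e -> j \in val e -> (O e = i <-> O' e = j)).

Definition P_le n (I : {set {set 'I_n}}) : relation {ffun {H : {set 'I_n} | H \in I} -> 'I_n} :=
  clos_refl_trans _ (fun O O' => acyclic_orientation O /\ acyclic_orientation O' /\ increasing_flip O O').

(* Or_pi(H) = pi(min {j : pi(j) \in H}), written out relationally. *)
Definition is_Or n (I : {set {set 'I_n}}) (pi : 'S_n) (O : {ffun {H : {set 'I_n} | H \in I} -> 'I_n}) : Prop :=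
  forall e : {H : {set 'I_n} | H \in I},
    exists j : 'I_n, O e = pi j /\ pi j \in val e /\
      (forall k : 'I_n, pi k \in val e -> (j <= k)%N).

(* Weak order on permutations (one-line notation pi(0) ... pi(n-1)):
   inversions are the value pairs (a,b), a < b, with b occurring before a. *)
Definition inversions n (pi : 'S_n) : {set 'I_n * 'I_n} :=
  [set p : 'I_n * 'I_n | ((p.1 < p.2)%N && ((pi^-1)%g p.2 < (pi^-1)%g p.1)%N)].

Definition weak_le n (pi rho : 'S_n) : Prop := inversions pi \subset inversions rho.

Definition is_join T (le : T -> T -> Prop) (C : T -> Prop) (a b j : T) : Prop :=
  C j /\ le a j /\ le b j /\ (forall c, C c -> le a c -> le b c -> le j c).

Definition is_meet T (le : T -> T -> Prop) (C : T -> Prop) (a b m : T) : Prop :=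
  C m /\ le m a /\ le m b /\ (forall c, C c -> le c a -> le c b -> le c m).

(* An orientation A induces the digraph x -> y (y in H, y <> x, A H = x) on [n]; when A
   is acyclic its reachability is a partial order, and since hyperedges are intervals this
   order is convex.  A convex partial order has a least and a greatest linear extension,
   obtained by breaking ties increasingly, resp. decreasingly: these are sigma_A and tau_A.
   Or is monotone from the weak order to P_I, because exchanging two adjacent letters of a
   permutation changes Or by at most one increasing flip, and P_I is contained in the
   pointwise order.  Closure under intersection gives sigma_A <= tau_C whenever A <= C: a
   pair inverted by sigma_A but not by tau_C yields paths b ->* a for A and a ->* b for C
   which, shortened by convexity, become two hyperedges whose intersection A orients at b
   and C at a.  Hence Or (sigma_A \/ sigma_B) is the join of A and B in P_I, and dually
   Or (tau_A /\ tau_B) is their meet. *)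

From mathcomp Require Import all_boot all_order all_fingroup.
From Stdlib Require Import Relations.
From mathcomp Require Import zify.

Set Implicit Arguments.
Unset Strict Implicit.
Unset Printing Implicit Defensive.

Lemma connect_min (T : finType) (e le : rel T) :
  ssrbool.reflexive le -> ssrbool.transitive le -> subrel e le -> subrel (connect e) le.
Proof.
move=> le_refl le_trans ele x y /connectP[p]; elim: p x => [|z p IH] x /=; first by move=> _ ->.
by case/andP=> /ele xz /IH pz /pz; apply: le_trans.
Qed.

Definition between (x z y : nat) := (x <= z <= y) || (y <= z <= x).

Definition dir_lt (up : bool) (u v : nat) := if up then u < v else v < u.

Lemma between_id x z : between x z x -> z = x.
Proof. rewrite /between; lia. Qed.

Lemma between_split x z w y : between x z w -> between x z y || between y z w.
Proof. rewrite /between; lia. Qed.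

Lemma dir_lt_asym up u v : dir_lt up u v -> ~~ dir_lt up v u.
Proof. case: up; rewrite /dir_lt; lia. Qed.

Lemma dir_lt_trans up u v w : dir_lt up u v -> dir_lt up v w -> dir_lt up u w.
Proof. case: up; rewrite /dir_lt; lia. Qed.

Lemma dir_lt_total n up (u v : 'I_n) : u != v -> dir_lt up u v || dir_lt up v u.
Proof. by move=> nuv; have : val u != val v by []; rewrite neq_ltn; case: up; rewrite //= orbC. Qed.

Lemma dir_lt_between up u v w : dir_lt up u v -> dir_lt up v w -> between w v u.
Proof. case: up; rewrite /dir_lt /between; lia. Qed.

Lemma dir_lt_inner up x z y :
  dir_lt up x y -> between x z y -> z != x -> z != y -> dir_lt up x z && dir_lt up z y.
Proof. case: up; rewrite /dir_lt /between; lia. Qed.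

Definition convex_rel n (R : rel 'I_n) : Prop :=
  forall x y z : 'I_n, R x y -> between x z y -> R x z || R z y.

Lemma connect_convex n (r : rel 'I_n) : convex_rel r -> convex_rel (connect r).
Proof.
move=> r_convex x y z0 cxy.
pose R u v := connect r u v &&
  [forall z : 'I_n, between u z v ==> connect r u z || connect r z v].
suff : R x y by case/andP=> _ /forallP/(_ z0)/implyP.
apply: connect_min cxy => [u | v u w /andP[cuv /forallP Ruv] /andP[cvw /forallP Rvw] | u v ruv].
- apply/andP; split=> //; apply/forallP=> z; apply/implyP=> /between_id/val_inj->.
  by rewrite connect0.
- rewrite /R (connect_trans cuv cvw); apply/forallP=> z; apply/implyP.
  case/(between_split v)/orP=> [/(implyP (Ruv z))|/(implyP (Rvw z))] /orP[] cz.
  + by rewrite cz.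
  + by rewrite (connect_trans cz cvw) orbT.
  + by rewrite (connect_trans cuv cz).
  + by rewrite cz orbT.
- rewrite /R connect1 //; apply/forallP=> z; apply/implyP=> /(r_convex _ _ _ ruv).
  by case/orP=> /connect1 ->; rewrite ?orbT.
Qed.

Lemma connect_between n (r : rel 'I_n) :
  (forall x y z : 'I_n, r x y -> between x z y -> connect r x z) ->
  forall x y z : 'I_n, connect r x y -> between x z y -> connect r x z.
Proof.
move=> r_between x y z0 cxy.
pose R u v := connect r u v && [forall z : 'I_n, between u z v ==> connect r u z].
suff : R x y by case/andP=> _ /forallP/(_ z0)/implyP.
apply: connect_min cxy => [u | v u w /andP[cuv /forallP Ruv] /andP[cvw /forallP Rvw] | u v ruv].
- rewrite /R connect0; apply/forallP=> z; apply/implyP=> /between_id/val_inj->.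
  exact: connect0.
- rewrite /R (connect_trans cuv cvw); apply/forallP=> z; apply/implyP.
  case/(between_split v)/orP=> [/(implyP (Ruv z)) // | /(implyP (Rvw z))].
  exact: connect_trans cuv.
- rewrite /R connect1 //; apply/forallP=> z; apply/implyP; exact: r_between.
Qed.

Definition pos n (pi : 'S_n) (x : 'I_n) : nat := (pi^-1)%g x.

Lemma pos_inj n (pi : 'S_n) : injective (pos pi).
Proof. by move=> u v /val_inj/perm_inj. Qed.

Lemma perm_of_strict_total n (lt : rel 'I_n) :
  irreflexive lt -> ssrbool.transitive lt -> (forall u v, u != v -> lt u v || lt v u) ->
  exists pi : 'S_n, forall u v, (pos pi u < pos pi v) = lt u v.
Proof.
move=> irr tr tot.
pose rk x := #|[set y | lt y x]|.
have rk_lt x : rk x < n.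
  rewrite -[n]card_ord -cardsT; apply: proper_card; rewrite properT.
  by apply/negP=> /eqP E; have := in_setT x; rewrite -E inE irr.
have rk_mono x y : lt x y -> rk x < rk y.
  move=> lxy; apply: proper_card; apply/properP; split.
    by apply/subsetP=> z; rewrite !inE => /tr; apply.
  by exists x; rewrite !inE ?irr.
have rk_inj : injective (fun x => Ordinal (rk_lt x)).
  move=> x y [E]; apply/eqP; apply: contraT => /tot /orP[] /rk_mono; by rewrite E ltnn.
exists (perm rk_inj)^-1%g => u v; rewrite /pos invgK !permE /=.
case luv: (lt u v); first exact: rk_mono.
have [-> | /tot] := eqVneq u v; first by rewrite ltnn.
by rewrite luv /= => /rk_mono/ltnW; rewrite leqNgt => /negbTE.
Qed.

Section LinearExtension.
Variables (n : nat) (r : rel 'I_n) (up : bool).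
Hypothesis r_antisym : forall u v, connect r u v -> connect r v u -> u = v.
Hypothesis r_convex : convex_rel (connect r).

(* Convexity of [connect r] is what makes this tie-breaking transitive. *)
Definition ext_lt (u v : 'I_n) : bool :=
  (u != v) && (connect r u v || dir_lt up u v && ~~ connect r v u).

Lemma ext_lt_irr : irreflexive ext_lt.
Proof. by move=> u; rewrite /ext_lt eqxx. Qed.

Lemma ext_lt_total u v : u != v -> ext_lt u v || ext_lt v u.
Proof.
move=> nuv; rewrite /ext_lt nuv eq_sym nuv /=.
by case/orP: (dir_lt_total up nuv) => ->; case: (connect r v u); case: (connect r u v);
  rewrite /= ?orbT.
Qed.

Lemma ext_lt_trans : ssrbool.transitive ext_lt.
Proof.
have ctr := @connect_trans _ r.
move=> v u w /andP[nuv Huv] /andP[nvw Hvw].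
have nuw : u != w.
  apply: contraTneq Hvw => <-; rewrite negb_or negb_and negbK.
  case/orP: Huv => [cuv | /andP[duv ->]].
  - by rewrite cuv orbT andbT; apply: contra nuv => /(r_antisym cuv) ->.
  - by rewrite dir_lt_asym.
rewrite /ext_lt nuw /=.
case/orP: Huv => [cuv | /andP[duv ncvu]]; case/orP: Hvw => [cvw | /andP[dvw ncwv]].
- by rewrite (ctr _ _ _ cuv cvw).
- have ncwu : ~~ connect r w u by apply: contra ncwv => /ctr; apply.
  rewrite ncwu andbT; case/orP: (dir_lt_total up nuw) => [->|dwu]; first by rewrite orbT.
  have /orP[] := r_convex cuv (dir_lt_between dvw dwu) => [->//|cwv].
  by rewrite cwv in ncwv.
- have ncwu : ~~ connect r w u by apply: contra ncvu => /(ctr _ _ _ cvw).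
  rewrite ncwu andbT; case/orP: (dir_lt_total up nuw) => [->|dwu]; first by rewrite orbT.
  have /orP[] := r_convex cvw (dir_lt_between dwu duv) => [cvu|->//].
  by rewrite cvu in ncvu.
- rewrite (dir_lt_trans duv dvw) /=; apply/orP; right; apply/negP => cwu.
  have /orP[] := r_convex cwu (dir_lt_between duv dvw) => [cwv|cvu].
  + by rewrite cwv in ncwv.
  + by rewrite cvu in ncvu.
Qed.

Lemma linear_extension : exists pi : 'S_n, forall u v, (pos pi u < pos pi v) = ext_lt u v.
Proof. exact: perm_of_strict_total ext_lt_irr ext_lt_trans ext_lt_total. Qed.

End LinearExtension.

Section ExtremalExtensions.
Variables (n : nat) (r : rel 'I_n).
Hypothesis r_antisym : forall u v, connect r u v -> connect r v u -> u = v.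
Hypothesis r_convex : convex_rel (connect r).

Lemma ext_lt_step up u v : r u v -> u != v -> ext_lt r up u v.
Proof. by move=> ruv nuv; rewrite /ext_lt nuv connect1. Qed.

Lemma bottom_extension : exists pi : 'S_n,
  (forall u v, r u v -> u != v -> pos pi u < pos pi v) /\
  (forall a b : 'I_n, a < b -> pos pi b < pos pi a -> connect r b a).
Proof.
have [pi Hpi] := linear_extension true r_antisym r_convex.
exists pi; split=> [u v ruv nuv | a b ab]; first by rewrite Hpi ext_lt_step.
by rewrite Hpi => /andP[_ /orP[// | /andP[ba _]]]; move: (ltn_trans ab ba); rewrite ltnn.
Qed.

Lemma top_extension : exists pi : 'S_n,
  (forall u v, r u v -> u != v -> pos pi u < pos pi v) /\
  (forall a b : 'I_n, a < b -> ~~ connect r a b -> pos pi b < pos pi a).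
Proof.
have [pi Hpi] := linear_extension false r_antisym r_convex.
exists pi; split=> [u v ruv nuv | a b ab ncab]; first by rewrite Hpi ext_lt_step.
by rewrite Hpi /ext_lt /dir_lt ab ncab orbT andbT (negbT (gtn_eqF ab)).
Qed.

End ExtremalExtensions.

Lemma connect_pos_le n (r : rel 'I_n) (c : 'S_n) :
  (forall u v, r u v -> pos c u < pos c v) -> forall u v, connect r u v -> pos c u <= pos c v.
Proof.
move=> hr; apply: connect_min => [u | y x z | u v /hr/ltnW //]; first exact: leqnn.
exact: leq_trans.
Qed.

Lemma weak_leP n (pi rho : 'S_n) :
  weak_le pi rho <->
  (forall a b : 'I_n, a < b -> pos pi b < pos pi a -> pos rho b < pos rho a).
Proof.
split=> [/subsetP le a b ab ba | le].
  by have := le (a, b); rewrite !inE /= ab ba => /(_ isT).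
by apply/subsetP=> [[a b]]; rewrite !inE /= => /andP[ab ba]; rewrite ab le.
Qed.

Lemma weak_le_noninv n (pi rho : 'S_n) (a b : 'I_n) :
  weak_le pi rho -> a < b -> pos rho a < pos rho b -> pos pi a < pos pi b.
Proof.
move=> /weak_leP le ab; apply: contraTT; rewrite -!leqNgt leq_eqVlt.
case/orP=> [/eqP/pos_inj ba | /(le _ _ ab)/ltnW //].
by move: ab; rewrite ba ltnn.
Qed.

(* For [up = false] the steps u -> v are the inversions (v, u) of p1 or p2, and the join of
   p1 and p2 inverts exactly the pairs joined by a path; [up = true] serves the meet. *)
Definition union_order n (up : bool) (p1 p2 : 'S_n) (u v : 'I_n) : bool :=
  dir_lt up u v && ((pos p1 u < pos p1 v) || (pos p2 u < pos p2 v)).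

Section UnionOrder.
Variables (n : nat) (up : bool) (p1 p2 : 'S_n).
Local Notation r := (union_order up p1 p2).

Lemma union_order_antisym u v : connect r u v -> connect r v u -> u = v.
Proof.
have dir : subrel (connect r) (fun x y => (x == y) || dir_lt up x y).
  apply: connect_min => [x | y x z | x y /andP[-> _]]; rewrite ?eqxx ?orbT //.
  case/orP=> [/eqP-> // | dxy] /orP[/eqP<- | dyz]; first by rewrite dxy orbT.
  by rewrite (dir_lt_trans dxy dyz) orbT.
move=> /dir /orP[/eqP // | duv] /dir /orP[/eqP // | dvu].
by have := dir_lt_asym duv; rewrite dvu.
Qed.

Lemma union_order_convex : convex_rel r.
Proof.
move=> x y z /[dup] rxy /andP[dxy hxy] bxzy.
have [-> | nzx] := eqVneq z x; first by rewrite rxy orbT.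
have [-> | nzy] := eqVneq z y; first by rewrite rxy.
have /andP[dxz dzy] := dir_lt_inner dxy bxzy nzx nzy.
have along p : pos p x < pos p y ->
    (forall u v : 'I_n, dir_lt up u v -> pos p u < pos p v -> r u v) -> r x z || r z y.
  move=> pxy sub; case: (ltngtP (pos p x) (pos p z)) => [xz | zx | /pos_inj xz].
  - by rewrite sub.
  - by rewrite orbC sub // (ltn_trans zx pxy).
  - by rewrite xz eqxx in nzx.
by case/orP: hxy => h; apply: (along _ h) => u v duv puv; rewrite /union_order duv puv ?orbT.
Qed.

End UnionOrder.

Lemma weak_join_exists n (p1 p2 : 'S_n) :
  exists rho, is_join (@weak_le n) (fun _ => True) p1 p2 rho.
Proof.
have [rho [rho_step rho_min]] := bottom_extension (@union_order_antisym n false p1 p2)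
  (connect_convex (@union_order_convex n false p1 p2)).
have ub p : p = p1 \/ p = p2 -> weak_le p rho.
  move=> hp; apply/weak_leP => a b ab ba; apply: rho_step; last exact: negbT (gtn_eqF ab).
  by rewrite /union_order /dir_lt ab; case: hp => <-; rewrite ba ?orbT.
exists rho; split=> //; split; first exact: ub (or_introl erefl).
split; first exact: ub (or_intror erefl).
move=> c _ /weak_leP c1 /weak_leP c2; apply/weak_leP => a b ab /(rho_min _ _ ab).
have steps u v : union_order false p1 p2 u v -> pos c u < pos c v.
  by case/andP=> vu /orP[h | h]; [exact: c1 vu h | exact: c2 vu h].
move=> /(connect_pos_le steps); rewrite leq_eqVlt => /orP[/eqP/pos_inj ba | //].
by move: ab; rewrite ba ltnn.
Qed.

Lemma weak_meet_exists n (p1 p2 : 'S_n) :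
  exists rho, is_meet (@weak_le n) (fun _ => True) p1 p2 rho.
Proof.
have [rho [rho_step rho_max]] := top_extension (@union_order_antisym n true p1 p2)
  (connect_convex (@union_order_convex n true p1 p2)).
have lb p : p = p1 \/ p = p2 -> weak_le rho p.
  move=> hp; apply/weak_leP => a b ab; apply: contraTT; rewrite -!leqNgt leq_eqVlt.
  case/orP=> [/eqP/pos_inj ba | pab]; first by move: ab; rewrite ba ltnn.
  apply/ltnW/rho_step; last exact: negbT (ltn_eqF ab).
  by rewrite /union_order /dir_lt ab; case: hp => <-; rewrite pab ?orbT.
exists rho; split=> //; split; first exact: lb (or_introl erefl).
split; first exact: lb (or_intror erefl).
move=> c _ c1 c2; apply/weak_leP => a b ab cba; apply: rho_max => //; apply/negP.
have steps u v : union_order true p1 p2 u v -> pos c u < pos c v.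
  by case/andP=> uv /orP[]; [apply: weak_le_noninv c1 _ | apply: weak_le_noninv c2 _].
by move=> /(connect_pos_le steps); rewrite leqNgt cba.
Qed.

Notation edge n I := {H : {set 'I_n} | H \in I}.
Notation ori n I := {ffun edge n I -> 'I_n}.

Lemma interval_between n (H : {set 'I_n}) (i j k : 'I_n) :
  is_interval H -> i \in H -> k \in H -> between i j k -> j \in H.
Proof.
case/andP=> _ /forallP conv iH kH /orP[] /andP[ij jk].
  by have /forallP/(_ j)/forallP/(_ k) := conv i; rewrite iH kH ij jk; apply.
by have /forallP/(_ j)/forallP/(_ i) := conv k; rewrite iH kH ij jk; apply.
Qed.

Section Reachability.
Variables (n : nat) (I : {set {set 'I_n}}).
Hypothesis I_interval : interval_hypergraph I.
Hypothesis I_closed : closed_under_intersection I.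

Definition vertex_step (O : ori n I) (x y : 'I_n) : bool :=
  [exists e, (O e == x) && (y \in val e) && (y != x)].

Lemma vertex_stepP (O : ori n I) x y :
  reflect (exists e, [/\ O e = x, y \in val e & y != x]) (vertex_step O x y).
Proof.
apply: (iffP existsP) => [[e /andP[/andP[/eqP Oe ye] yx]] | [e [Oe ye yx]]]; exists e => //.
by rewrite Oe eqxx ye yx.
Qed.

Lemma edge_interval (e : edge n I) : is_interval (val e).
Proof. exact: I_interval.1 _ (valP e). Qed.

Lemma vertex_step_between (O : ori n I) (x y z : 'I_n) : is_orientation O ->
  vertex_step O x y -> between x z y -> connect (vertex_step O) x z.
Proof.
move=> hO /vertex_stepP[e [Oe ye _]] xzy; have [-> | nzx] := eqVneq z x; first exact: connect0.
apply/connect1/vertex_stepP; exists e; split=> //.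
by apply: interval_between (edge_interval e) _ ye xzy; rewrite -Oe.
Qed.

Lemma reach_between (O : ori n I) (x y z : 'I_n) : is_orientation O ->
  connect (vertex_step O) x y -> between x z y -> connect (vertex_step O) x z.
Proof. by move=> hO; apply: connect_between => u v w; apply: vertex_step_between. Qed.

Lemma vertex_path_edges (O : ori n I) (x : 'I_n) (p : seq 'I_n) :
  path (vertex_step O) x p -> p != [::] ->
  exists e0 s, [/\ O e0 = x, path (orient_step O) e0 s, last x p \in val (last e0 s),
                   last x p != O (last e0 s) & size s = (size p).-1].
Proof.
elim: p x => [//|v p IH] x /= /andP[/vertex_stepP[e [Oe ve vx]] pv] _.
have [-> | np] := eqVneq p [::]; first by exists e, [::]; rewrite /= Oe.
have [e1 [s [Oe1 ps last_in last_neq size_s]]] := IH _ pv np.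
exists e, (e1 :: s); split=> //=; first by rewrite ps andbT /orient_step Oe1 Oe ve vx.
by rewrite size_s; case: p np {IH pv last_in last_neq size_s}.
Qed.

Lemma reach_antisym (O : ori n I) (x y : 'I_n) : acyclic O ->
  connect (vertex_step O) x y -> connect (vertex_step O) y x -> x = y.
Proof.
move=> hA /connectP[p1 pp1 L1] /connectP[p2 pp2 L2]; apply/eqP; apply: contraT => nxy.
have n1 : p1 != [::] by apply: contraNneq nxy => E; rewrite L1 E.
have n2 : p2 != [::] by apply: contraNneq nxy => E; rewrite L2 E.
have pp : path (vertex_step O) x (p1 ++ p2) by rewrite cat_path pp1 -L1 pp2.
have np : p1 ++ p2 != [::] by case: (p1) n1.
have [e0 [s [Oe0 ps]]] := vertex_path_edges pp np.
rewrite last_cat -L1 -L2 => last_in last_neq size_s.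
have size2 : 1 < size (e0 :: s).
  by rewrite /= size_s size_cat; case: (p1) n1 => // ? ?; case: (p2) n2 => // ? ?; rewrite /= addnS.
by have := hA _ size2; rewrite /= rcons_path ps /orient_step Oe0 last_in last_neq.
Qed.

Lemma orientation_sub_edge (O : ori n I) (e f : edge n I) : acyclic_orientation O ->
  val f \subset val e -> O e \in val f -> O f = O e.
Proof.
move=> [hO hA] fe Oef; apply/eqP; apply: contraT => nfe.
have := hA [:: e; f] isT; rewrite /= /orient_step Oef (subsetP fe _ (hO f)) nfe eq_sym nfe.
by [].
Qed.

Lemma reach_first_step (O : ori n I) (x y : 'I_n) : acyclic_orientation O ->
  connect (vertex_step O) x y -> y != x ->
  (exists e, O e = x /\ y \in val e) \/
  (exists v : 'I_n, ((x < v < y) || (y < v < x)) /\ connect (vertex_step O) v y).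
Proof.
move=> [hO hA] /connectP[[|v p] /= pp Ly] nyx; first by rewrite Ly eqxx in nyx.
case/andP: pp => /vertex_stepP[e [Oe ve vx]] pv.
have cvy : connect (vertex_step O) v y by apply/connectP; exists p.
have [Evy | nvy] := eqVneq v y; first by left; exists e; rewrite -Evy.
have : (x < v < y) || (y < v < x) || between x y v || between v x y.
  by move: vx nvy nyx; rewrite -!val_eqE /between /=; lia.
case/orP=> [/orP[] | vxy]; first by [right; exists v]; first last.
  have cvx := reach_between hO cvy vxy.
  have cxv : connect (vertex_step O) x v by apply/connect1/vertex_stepP; exists e.
  by move: vx; rewrite (reach_antisym hA cxv cvx) eqxx.
move=> xyv; left; exists e; split=> //.
by apply: interval_between (edge_interval e) _ ve xyv; rewrite -Oe.
Qed.

Lemma crossing_edges_contra (A C : ori n I) (eA eC : edge n I) (a b : 'I_n) :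
  acyclic_orientation A -> acyclic_orientation C -> (forall e, A e <= C e) -> a < b ->
  A eA = b -> a \in val eA -> C eC = a -> b \in val eC -> False.
Proof.
move=> hA hC AC ab Aa aA Ca bC.
have aC : a \in val eC by rewrite -Ca; apply: hC.1.
have bA : b \in val eA by rewrite -Aa; apply: hA.1.
have KI : val eA :&: val eC \in I.
  by apply: I_closed (valP eA) (valP eC) _; apply/set0Pn; exists a; rewrite inE aA aC.
pose K : edge n I := exist (fun H => H \in I) _ KI.
have AK : A K = b.
  by rewrite -Aa; apply: (orientation_sub_edge (f := K) hA (subsetIl _ _)); rewrite Aa inE bA bC.
have CK : C K = a.
  by rewrite -Ca; apply: (orientation_sub_edge (f := K) hC (subsetIr _ _)); rewrite Ca inE aA aC.
by have := AC K; rewrite AK CK leqNgt ab.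
Qed.

Lemma reach_down_excludes_reach_up (A C : ori n I) :
  acyclic_orientation A -> acyclic_orientation C -> (forall e, A e <= C e) ->
  forall a b : 'I_n, a < b -> connect (vertex_step A) b a -> ~~ connect (vertex_step C) a b.
Proof.
move=> hA hC AC.
suff bounded k (a b : 'I_n) : b - a < k -> a < b ->
    connect (vertex_step A) b a -> connect (vertex_step C) a b -> False.
  by move=> a b ab rA; apply/negP; apply: (bounded (b - a).+1).
elim: k a b => [//|k IH] a b hk ab rA rC.
have [[eA [Aa aA]] | [v [vab rvA]]] := reach_first_step hA rA (negbT (ltn_eqF ab)).
  have [[eC [Ca bC]] | [u [uab ruC]]] := reach_first_step hC rC (negbT (gtn_eqF ab)).
    exact: crossing_edges_contra hA hC AC ab Aa aA Ca bC.
  have rAu : connect (vertex_step A) b u by apply: reach_between hA.1 rA _; rewrite /between; lia.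
  by apply: (IH u b) => //; lia.
have rCv : connect (vertex_step C) a v by apply: reach_between hC.1 rC _; rewrite /between; lia.
by apply: (IH a v) => //; lia.
Qed.

End Reachability.

Lemma pos_ltE n (p : 'S_n) (u v : 'I_n) :
  (pos p u < pos p v) = if u < v then (u, v) \notin inversions p else (v, u) \in inversions p.
Proof.
rewrite !inE /=; case: (ltngtP u v) => [uv | vu | /val_inj ->]; rewrite ?ltnn //=.
have nuv : pos p u != pos p v by apply/eqP=> /pos_inj E; move: uv; rewrite E ltnn.
by rewrite ltn_neqAle nuv -leqNgt.
Qed.

Lemma pos_swap n (pi : 'S_n) (a b x : 'I_n) : pos (pi * tperm a b) x = pos pi (tperm a b x).
Proof. by rewrite /pos invMg tpermV permM. Qed.

Lemma descent (g : nat -> nat) p q :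
  p < q -> g q < g p -> exists2 k, p <= k < q & g k.+1 < g k.
Proof.
elim: q => [//|q IH]; rewrite ltnS leq_eqVlt => /orP[/eqP<- | pq] gq.
  by exists p; rewrite ?leqnn.
have [gqq | gq_le] := ltnP (g q.+1) (g q); first by exists q; rewrite // (ltnW pq) /=.
have [k /andP[pk kq] gk] := IH pq (leq_ltn_trans gq_le gq).
by exists k; rewrite // pk ltnS ltnW.
Qed.

Lemma adjacent_inversion n (pi rho : 'S_n) :
  weak_le pi rho -> ~~ (inversions rho \subset inversions pi) ->
  exists a b : 'I_n, [/\ a < b, pos pi b = (pos pi a).+1 & pos rho b < pos rho a].
Proof.
move=> le /subsetPn[[c d]]; rewrite !inE /= => /andP[cd rdc]; rewrite cd /= => pdc.
have pcd : pos pi c < pos pi d by rewrite pos_ltE cd !inE /= cd.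
pose at_pos k := pi (insubd c k).
have pos_at x : at_pos (pos pi x) = x by rewrite /at_pos /pos valKd permKV.
have at_pos_ok k : k < n -> pos pi (at_pos k) = k by move=> kn; rewrite /pos permK val_insubd kn.
pose g k := pos rho (at_pos k).
have [k /andP[ck kd] gk] : exists2 k, pos pi c <= k < pos pi d & g k.+1 < g k.
  by apply: (descent (g := g) pcd); rewrite /g !pos_at.
have kn : k.+1 < n by apply: leq_ltn_trans kd (ltn_ord _).
case: (ltngtP (at_pos k) (at_pos k.+1)) => [xy | yx | /val_inj E].
- by exists (at_pos k), (at_pos k.+1); rewrite !at_pos_ok ?(ltnW kn).
- move/weak_leP: le => /(_ _ _ yx); rewrite !at_pos_ok ?(ltnW kn) // ltnSn => /(_ isT).
  by rewrite ltnNge (ltnW gk).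
- by move: (at_pos_ok _ (ltnW kn)); rewrite E at_pos_ok // => /esym/n_Sn.
Qed.

Lemma inversions_swap n (pi : 'S_n) (a b : 'I_n) : a < b -> pos pi b = (pos pi a).+1 ->
  inversions (pi * tperm a b) = (a, b) |: inversions pi.
Proof.
move=> ab adj; apply/setP=> [[u v]]; rewrite in_setU1 !inE /= xpair_eqE -!/(pos _ _) !pos_swap.
have off x : x != a -> x != b -> pos pi x != pos pi a /\ pos pi x != pos pi b.
  by move=> xa xb; split; [apply: contraNneq xa | apply: contraNneq xb] => /pos_inj ->.
have nab : (a == b) = false by apply/negbTE; rewrite -val_eqE /= neq_ltn ab.
have nba : (b == a) = false by rewrite eq_sym.
case: (tpermP a b u) => [-> | -> | /eqP ua /eqP ub];
  case: (tpermP a b v) => [-> | -> | /eqP va /eqP vb].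
all: rewrite ?eqxx ?nab ?nba /=; try rewrite (negbTE ua); try rewrite (negbTE vb).
all: try have [? ?] := off _ ua ub; try have [? ?] := off _ va vb; lia.
Qed.

Section OrientationOfPermutation.
Variables (n : nat) (I : {set {set 'I_n}}).
Implicit Types (pi rho : 'S_n) (O : ori n I).

Lemma is_OrP pi O :
  is_Or pi O <-> forall e, O e \in val e /\ forall y, y \in val e -> pos pi (O e) <= pos pi y.
Proof.
split=> [hO e | hO e].
  have [j [-> [je jmin]]] := hO e; split=> // y ye.
  by rewrite /pos permK; apply: jmin; rewrite permKV.
have [Oe Omin] := hO e; exists (pi^-1 (O e))%g; rewrite permKV; do 2!split=> //.
by move=> k /Omin; rewrite /pos permK.
Qed.

Lemma is_Or_orientation pi O : is_Or pi O -> is_orientation O.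
Proof. by move=> /is_OrP hO e; case: (hO e). Qed.

(* [O0] only supplies a point of each hyperedge as default value of the arg min. *)
Lemma is_Or_exists pi O0 : is_orientation O0 -> exists O, is_Or pi O.
Proof.
move=> hO0; exists [ffun e => [arg min_(x < O0 e in val e) pos pi x]].
by apply/is_OrP=> e; rewrite ffunE; case: arg_minnP.
Qed.

Lemma is_Or_uniq pi O O' : is_Or pi O -> is_Or pi O' -> O = O'.
Proof.
move=> /is_OrP hO /is_OrP hO'; apply/ffunP=> e.
have [Oe Omin] := hO e; have [O'e O'min] := hO' e.
by apply: (@pos_inj _ pi); apply/eqP; rewrite eqn_leq Omin // O'min.
Qed.

Lemma is_Or_of_steps pi O : is_orientation O ->
  (forall (e : edge n I) y, y \in val e -> y != O e -> pos pi (O e) < pos pi y) -> is_Or pi O.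
Proof.
move=> hO steps; apply/is_OrP=> e; split=> // y ye.
have [-> // | yO] := eqVneq y (O e).
exact/ltnW/steps.
Qed.

Lemma is_Or_inversions pi rho O : inversions pi = inversions rho -> is_Or pi O -> is_Or rho O.
Proof.
move=> inv /is_OrP hO; apply/is_OrP=> e; have [Oe Omin] := hO e; split; first exact: Oe.
by move=> y /Omin; apply: contraTT; rewrite -!ltnNge !pos_ltE inv.
Qed.

Lemma is_Or_acyclic pi O : is_Or pi O -> acyclic_orientation O.
Proof.
move=> hO; split; first exact: is_Or_orientation hO.
move/is_OrP: hO => hO [//|e s] _; apply/negP => /=.
pose lt (f g : edge n I) := pos pi (O f) < pos pi (O g).
have step : subrel (orient_step O) lt.
  move=> f g /andP[gf gf_neq]; rewrite /lt ltn_neqAle (proj2 (hO f)) // andbT.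
  by apply: contra gf_neq => /eqP/pos_inj ->.
move=> /(sub_path step) /(order_path_min (fun a b c => @ltn_trans _ _ _)) /allP.
by move=> /(_ e); rewrite mem_rcons mem_head /lt ltnn => /(_ isT).
Qed.

Lemma Or_swap_adjacent pi (a b : 'I_n) O O' e :
  pos pi b = (pos pi a).+1 -> is_Or pi O -> is_Or (pi * tperm a b) O' ->
  O' e = if (O e == a) && (b \in val e) then b else O e.
Proof.
move=> adj /is_OrP/(_ e)[Oe Omin] /is_OrP/(_ e)[O'e O'min].
set c := if _ then b else _.
have ce : c \in val e by rewrite /c; case: ifP => // /andP[].
suff cmin y : y \in val e -> pos (pi * tperm a b) c <= pos (pi * tperm a b) y.
  by apply: (@pos_inj _ (pi * tperm a b)); apply/eqP; rewrite eqn_leq O'min // cmin.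
move=> ye; have := Omin _ ye; rewrite /c !pos_swap; clear O'e O'min ce Omin.
have off x : x != a -> x != b -> pos pi x != pos pi a /\ pos pi x != pos pi b.
  by move=> xa xb; split; [apply: contraNneq xa | apply: contraNneq xb] => /pos_inj ->.
case: ifP => [/andP[/eqP-> _] | c_ab].
  by rewrite tpermR; case: (tpermP a b y) => [-> | -> | _ _]; lia.
case: (tpermP a b (O e)) => [Oa | Ob | /eqP Oa /eqP Ob].
- move: c_ab; rewrite Oa eqxx /= => /negbT bNe.
  case: (tpermP a b y) => [-> | yb | /eqP ya /eqP yb]; first lia.
    by move: bNe; rewrite -yb ye.
  by have [? ?] := off y ya yb; lia.
- by rewrite Ob; case: (tpermP a b y) => [-> | -> | _ _]; lia.
- have [? ?] := off _ Oa Ob; clear off c_ab Oa Ob.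
  by case: (tpermP a b y) => [-> | -> | _ _]; lia.
Qed.

End OrientationOfPermutation.

Section Monotonicity.
Variables (n : nat) (I : {set {set 'I_n}}).
Implicit Types (pi rho : 'S_n) (O : ori n I).

Lemma Or_swap_P_le pi (a b : 'I_n) O O' : a < b -> pos pi b = (pos pi a).+1 ->
  is_Or pi O -> is_Or (pi * tperm a b) O' -> P_le O O'.
Proof.
move=> ab adj hO hO'.
have [<- | neq] := eqVneq O O'; first exact: rt_refl.
apply: rt_step; split; first exact: is_Or_acyclic hO.
split; first exact: is_Or_acyclic hO'.
split; first exact/eqP.
exists a, b; split=> // e; rewrite (Or_swap_adjacent e adj hO hO').
case: ifP => [/andP[/eqP-> _] | c_ab]; first by do 2!split.
split=> // ae be; split=> [Oa | Ob]; first by rewrite Oa eqxx be in c_ab.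
have /is_OrP/(_ e)[_ /(_ a ae)] := hO.
by rewrite Ob adj ltnn.
Qed.

Lemma Or_mono pi rho O O' : weak_le pi rho -> is_Or pi O -> is_Or rho O' -> P_le O O'.
Proof.
move=> le hO hO'; have [k] := ubnP #|inversions rho :\: inversions pi|.
elim: k pi O le hO => [//|k IH] pi O le hO hk.
have [ge | nge] := boolP (inversions rho \subset inversions pi).
  have same : inversions pi = inversions rho by apply/eqP; rewrite eqEsubset le.
  by rewrite (is_Or_uniq (is_Or_inversions same hO) hO'); apply: rt_refl.
have [a [b [ab adj rba]]] := adjacent_inversion le nge.
have [O1 hO1] := is_Or_exists (pi * tperm a b) (is_Or_orientation hO).
have inv1 := inversions_swap ab adj.
have ab_rho : (a, b) \in inversions rho by rewrite !inE /= ab.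
apply: rt_trans (Or_swap_P_le ab adj hO hO1) (IH _ _ _ hO1 _).
  by rewrite /weak_le inv1 subUset sub1set ab_rho.
rewrite -ltnS; apply: leq_trans hk; apply: proper_card; rewrite inv1; apply/properP; split.
  by apply: setDS; apply: subsetUr.
have ab_pi : (a, b) \notin inversions pi.
  have : pos pi a < pos pi b by rewrite adj.
  by rewrite pos_ltE ab.
by exists (a, b); rewrite in_setD ?in_setU1 ?eqxx ?ab_pi.
Qed.

End Monotonicity.

Lemma P_le_pointwise n (I : {set {set 'I_n}}) (A B : ori n I) :
  P_le A B -> forall e, A e <= B e.
Proof.
elim=> [O O' [_ [_ [_ [i [j [ij flip]]]]]] e | O | O1 O2 O3 _ le12 _ le23 e] //.
  have [-> // | neq] := eqVneq (O e) (O' e).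
  by have [-> ->] := (flip e).1 (elimN eqP neq); apply: ltnW.
exact: leq_trans (le12 e) (le23 e).
Qed.

Section Fibers.
Variables (n : nat) (I : {set {set 'I_n}}).
Hypothesis I_interval : interval_hypergraph I.
Hypothesis I_closed : closed_under_intersection I.
Implicit Types (A B C : ori n I).

(* sigma_A and tau_A: [s] inverts only the pairs that reachability forces, [t] every pair
   it allows. *)
Definition is_sigma A (s : 'S_n) : Prop :=
  is_Or s A /\ forall a b : 'I_n, a < b -> pos s b < pos s a -> connect (vertex_step A) b a.

Definition is_tau A (t : 'S_n) : Prop :=
  is_Or t A /\ forall a b : 'I_n, a < b -> ~~ connect (vertex_step A) a b -> pos t b < pos t a.

Lemma reach_convex A : is_orientation A -> convex_rel (connect (vertex_step A)).
Proof. by move=> hO x y z cxy bxzy; rewrite (reach_between I_interval hO cxy bxzy). Qed.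

Lemma is_Or_of_reach A (pi : 'S_n) : is_orientation A ->
  (forall u v, vertex_step A u v -> u != v -> pos pi u < pos pi v) -> is_Or pi A.
Proof.
move=> hO pi_step; apply: is_Or_of_steps => // e y ye yA.
by apply: pi_step; [apply/vertex_stepP; exists e | rewrite eq_sym].
Qed.

Lemma sigma_exists A : acyclic_orientation A -> exists s, is_sigma A s.
Proof.
move=> [hO hA]; have [s [s_step s_min]] :=
  bottom_extension (fun u v => @reach_antisym n I A u v hA) (reach_convex hO).
by exists s; split=> //; apply: is_Or_of_reach.
Qed.

Lemma tau_exists A : acyclic_orientation A -> exists t, is_tau A t.
Proof.
move=> [hO hA]; have [t [t_step t_max]] :=
  top_extension (fun u v => @reach_antisym n I A u v hA) (reach_convex hO).
by exists t; split=> //; apply: is_Or_of_reach.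
Qed.

Lemma sigma_le_tau A C s t : (forall e, A e <= C e) ->
  is_sigma A s -> is_tau C t -> weak_le s t.
Proof.
move=> AC [sA s_min] [tC t_max]; apply/weak_leP=> a b ab sba.
apply: t_max => //; have [hA hC] := (is_Or_acyclic sA, is_Or_acyclic tC).
exact: (reach_down_excludes_reach_up I_interval I_closed hA hC AC ab (s_min _ _ ab sba)).
Qed.

Lemma fiber_extremes A sA tA : acyclic_orientation A ->
  (forall pi : 'S_n, is_Or pi A <-> weak_le sA pi /\ weak_le pi tA) ->
  is_sigma A sA /\ is_tau A tA.
Proof.
move=> hA fiber.
have [s [sA_s s_min]] := sigma_exists hA; have [t [tA_t t_max]] := tau_exists hA.
have [sA_le_s s_le_tA] := (fiber s).1 sA_s.
have [_ t_le_tA] := (fiber t).1 tA_t.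
have sA_le_tA : weak_le sA tA := subset_trans sA_le_s s_le_tA.
split; split.
- by apply/fiber; split; first exact: subxx.
- by move=> a b ab /((weak_leP _ _).1 sA_le_s _ _ ab); apply: s_min.
- by apply/fiber; split; last exact: subxx.
- by move=> a b ab /(t_max _ _ ab); apply: (weak_leP _ _).1 t_le_tA _ _ ab.
Qed.

Lemma P_join_formula A B sA sB : is_sigma A sA -> is_sigma B sB ->
  exists rho, is_join (@weak_le n) (fun _ => True) sA sB rho /\
    exists J, is_Or rho J /\ is_join (@P_le n I) (@acyclic_orientation n I) A B J.
Proof.
move=> sigA sigB; have [rho [_ [sA_rho [sB_rho rho_min]]]] := weak_join_exists sA sB.
have [J rhoJ] := is_Or_exists rho (is_Or_orientation sigA.1).
exists rho; split=> //; exists J; split=> //; split; first exact: is_Or_acyclic rhoJ.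
split; first exact: Or_mono sA_rho sigA.1 rhoJ.
split; first exact: Or_mono sB_rho sigB.1 rhoJ.
move=> C hC AC BC; have [t tauC] := tau_exists hC.
apply: Or_mono rhoJ tauC.1; apply: rho_min => //.
- exact: sigma_le_tau (P_le_pointwise AC) sigA tauC.
- exact: sigma_le_tau (P_le_pointwise BC) sigB tauC.
Qed.

Lemma P_meet_formula A B tA tB : is_tau A tA -> is_tau B tB ->
  exists rho, is_meet (@weak_le n) (fun _ => True) tA tB rho /\
    exists M, is_Or rho M /\ is_meet (@P_le n I) (@acyclic_orientation n I) A B M.
Proof.
move=> tauA tauB; have [rho [_ [rho_tA [rho_tB rho_max]]]] := weak_meet_exists tA tB.
have [M rhoM] := is_Or_exists rho (is_Or_orientation tauA.1).
exists rho; split=> //; exists M; split=> //; split; first exact: is_Or_acyclic rhoM.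
split; first exact: Or_mono rho_tA rhoM tauA.1.
split; first exact: Or_mono rho_tB rhoM tauB.1.
move=> C hC CA CB; have [s sigC] := sigma_exists hC.
apply: Or_mono sigC.1 rhoM; apply: rho_max => //.
- exact: sigma_le_tau (P_le_pointwise CA) sigC tauA.
- exact: sigma_le_tau (P_le_pointwise CB) sigC tauB.
Qed.

End Fibers.

Theorem proposition4p11 (n : nat) (I : {set {set 'I_n}}) :
  interval_hypergraph I -> closed_under_intersection I ->
  (* P_I is a lattice *)
  ((forall A B : {ffun {H : {set 'I_n} | H \in I} -> 'I_n}, acyclic_orientation A -> acyclic_orientation B ->
      P_le A B -> P_le B A -> A = B) /\
   (forall A B : {ffun {H : {set 'I_n} | H \in I} -> 'I_n}, acyclic_orientation A -> acyclic_orientation B ->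
      (exists J, is_join (@P_le n I) (@acyclic_orientation n I) A B J) /\
      (exists M, is_meet (@P_le n I) (@acyclic_orientation n I) A B M))) /\
  (* join and meet formulas; sA, tA (resp. sB, tB) are the endpoints of the fibers *)
  (forall (A B : {ffun {H : {set 'I_n} | H \in I} -> 'I_n}) (sA tA sB tB : 'S_n),
      acyclic_orientation A -> acyclic_orientation B ->
      (forall pi : 'S_n, is_Or pi A <-> weak_le sA pi /\ weak_le pi tA) ->
      (forall pi : 'S_n, is_Or pi B <-> weak_le sB pi /\ weak_le pi tB) ->
      (exists rho : 'S_n, is_join (@weak_le n) (fun _ => True) sA sB rho /\
         exists J, is_Or rho J /\ is_join (@P_le n I) (@acyclic_orientation n I) A B J) /\
      (exists rho : 'S_n, is_meet (@weak_le n) (fun _ => True) tA tB rho /\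
         exists M, is_Or rho M /\ is_meet (@P_le n I) (@acyclic_orientation n I) A B M)).
Proof.
move=> hI hC; split; [split|].
- move=> A B _ _ AB BA; apply/ffunP=> e; apply/val_inj/eqP.
  by rewrite eqn_leq (P_le_pointwise AB) (P_le_pointwise BA).
- move=> A B hA hB.
  have [sA sigA] := sigma_exists hI hA; have [sB sigB] := sigma_exists hI hB.
  have [tA tauA] := tau_exists hI hA; have [tB tauB] := tau_exists hI hB.
  have [_ [_ [J [_ joinJ]]]] := P_join_formula hI hC sigA sigB.
  have [_ [_ [M [_ meetM]]]] := P_meet_formula hI hC tauA tauB.
  by split; [exists J | exists M].
- move=> A B sA tA sB tB hA hB fibA fibB.
  have [sigA tauA] := fiber_extremes hI hA fibA.
  have [sigB tauB] := fiber_extremes hI hB fibB.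
  by split; [apply: P_join_formula | apply: P_meet_formula].
Qed.
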